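(* Let $A\in\mathbb{R}^{n\times n}$, $F\in\mathbb{R}^{m\times m}$ and $g\in\mathbb{R}^{m\times 1}$ be arbitrary. Set $G=g\otimes I_n$ and $H=I_m\otimes A+F\otimes I_n$. Then there exists a nonsingular $mn\times mn$ matrix $T$ such that $$\begin{bmatrix}G & HG & \cdots & H^{m-1}G\end{bmatrix}=\begin{bmatrix}g\otimes I_n & (Fg)\otimes I_n & \cdots & (F^{m-1}g)\otimes I_n\end{bmatrix}T.$$
   Context: $\otimes$ denotes the Kronecker product. *)

(* Kronecker product = mxtens.tensmx (A *t B) from mathcomp-real-closed,
   with the standard convention (A *t B) (i*p+k) (j*q+l) = A i j * B k l. *)
From HB Require Import structures.
From mathcomp Require Import all_boot all_order all_algebra.
From mathcomp Require Export mxtens.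
From mathcomp Require Export reals.
Set Implicit Arguments. Unset Strict Implicit. Unset Printing Implicit Defensive.

From HB Require Import structures.
From mathcomp Require Import all_boot all_order all_algebra.
From mathcomp Require Import mxtens reals.
Set Implicit Arguments.
Unset Strict Implicit.
Unset Printing Implicit Defensive.
Import GRing.Theory.
Local Open Scope ring_scope.

(* The matrices I ⊗ A and F ⊗ I commute, so the binomial theorem expands
   H^j G into the terms C(j,k) (F ⊗ I)^k (I ⊗ A)^(j-k) (g ⊗ I).  Since
   (I ⊗ A)(g ⊗ I) = (g ⊗ I)(1 ⊗ A), each term equals (F^k g ⊗ I) times the
   block C(j,k) (1 ⊗ A)^(j-k) of a block upper triangular Pascal-type matrix T,
   whose diagonal blocks are identities; hence T is invertible. *)

Lemma mxblock_unitriangular_unit (R : comUnitRingType) p (p_ : 'I_p -> nat)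
    (B_ : forall i j, 'M[R]_(p_ i, p_ j)) :
  (forall i j : 'I_p, (j < i)%N -> B_ i j = 0) -> (forall i, B_ i i = 1%:M) ->
  \mxblock_(i, j) B_ i j \in unitmx.
Proof.
move=> Blow Bdiag; rewrite unitmxE -det_tr det_trig.
  by rewrite big1 ?unitr1 // => s _; rewrite !mxE Bdiag mxE eqxx.
rewrite tr_mxblock; apply/is_trig_mxblockP; split=> [i j ltij|i].
  by rewrite Blow ?trmx0.
by rewrite Bdiag trmx1 scalar_mx_is_trig.
Qed.

Definition pascal_mx (R : pzSemiRingType) p m (B : 'M[R]_p) : 'M[R]_(\sum_(j < m) p) :=
  \mxblock_(k < m, j < m) (if (k <= j)%N then B ^+ (j - k) *+ 'C(j, k) else 0).

Lemma pascal_mx_unit (R : comUnitRingType) p m (B : 'M[R]_p) :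
  pascal_mx m B \in unitmx.
Proof.
apply: mxblock_unitriangular_unit => [k j ltjk|k].
  by rewrite leqNgt ltjk.
by rewrite leqnn subnn expr0 binn.
Qed.

Lemma mulmx_intertwineX (R : pzSemiRingType) N p (X : 'M[R]_N) (G : 'M[R]_(N, p))
    (B : 'M[R]_p) :
  X *m G = G *m B -> forall i, X ^+ i *m G = G *m B ^+ i.
Proof.
move=> XG; elim=> [|i IH]; first by rewrite !expr0 mul1mx mulmx1.
by rewrite !exprS -!mulmxE -mulmxA IH mulmxA XG mulmxA.
Qed.

Lemma mxrow_exprD_pascal (R : pzSemiRingType) N p m (X Y : 'M[R]_N)
    (G : 'M[R]_(N, p)) (B : 'M[R]_p) :
  GRing.comm X Y -> X *m G = G *m B ->
  \mxrow_(j < m) ((X + Y) ^+ j *m G)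
    = \mxrow_(j < m) (Y ^+ j *m G) *m pascal_mx m B.
Proof.
move=> cXY XG; rewrite mul_mxrow_mxblock; apply: eq_mxrow => j.
rewrite exprDn_comm // mulmx_suml.
rewrite (big_ord_widen m (fun k => X ^+ (j - k) * Y ^+ k *+ 'C(j, k) *m G))
  // big_mkcond /=.
apply: eq_bigr => k _; rewrite ltnS; case: ifP => _; last by rewrite mulmx0.
rewrite -[_ *+ _ *m G]/(mulmxr G _) !raddfMn /=; congr (_ *+ _).
have cYX : GRing.comm (Y ^+ k) (X ^+ (j - k)) by apply/commrX/commr_sym/commrX.
by rewrite -cYX -mulmxE -mulmxA (mulmx_intertwineX XG) mulmxA.
Qed.

Lemma tens1mx1 (R : pzRingType) m n :
  (1%:M : 'M[R]_m) *t (1%:M : 'M[R]_n) = 1%:M.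
Proof.
apply/matrixP => i j.
case: (mxtens_indexP i) => i0 i1; case: (mxtens_indexP j) => j0 j1.
by rewrite tensmxE !mxE (inj_eq (can_inj (@mxtens_indexK _ _))) -natrM mulnb.
Qed.

Lemma tensmxX (R : comPzRingType) m n (M : 'M[R]_m) (N : 'M[R]_n) k :
  (M *t N) ^+ k = M ^+ k *t N ^+ k.
Proof.
elim: k => [|k IH]; first by rewrite !expr0 tens1mx1.
by rewrite !exprS IH -!mulmxE tensmx_mul.
Qed.

Theorem lemma3 (R : realType) (n m : nat)
    (A : 'M[R]_n) (F : 'M[R]_m) (g : 'M[R]_(m, 1)) :
  let G : 'M[R]_(m * n, 1 * n) := g *t (1%:M : 'M[R]_n) in
  let H : 'M[R]_(m * n) := (1%:M : 'M[R]_m) *t A + F *t (1%:M : 'M[R]_n) in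
  exists T : 'M[R]_(\sum_(j < m) (1 * n)%N),
    T \in unitmx /\
    \mxrow_(j < m) (H ^+ j *m G)
      = \mxrow_(j < m) ((F ^+ j *m g) *t (1%:M : 'M[R]_n)) *m T.
Proof.
move=> G H.
have cAF : GRing.comm ((1%:M : 'M[R]_m) *t A) (F *t 1%:M).
  by rewrite /GRing.comm -mulmxE -tensmx_decl -tensmx_decr.
have AG : (1%:M *t A) *m G = G *m ((1%:M : 'M[R]_1) *t A).
  by rewrite /G !tensmx_mul !mul1mx !mulmx1.
exists (pascal_mx m ((1%:M : 'M[R]_1) *t A)); split; first exact: pascal_mx_unit.
rewrite /H (mxrow_exprD_pascal _ cAF AG); congr (_ *m _); apply: eq_mxrow => j.
by rewrite tensmxX expr1n tensmx_mul mulmx1.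
Qed.
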